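(* Let $K$ be an algebraically closed field of characteristic zero, $\mathcal{K}=K(t)$, $f(z) = z^2+t$, and $\alpha \in \mathcal{K}$. Then $\alpha$ does not realize portrait $(1,2)$ for $f$ if and only if $\alpha = 1/2$ or $\alpha$ satisfies condition $( * )$: \begin{itemize} \item $\alpha$ vanishes at $\mathfrak{p}_{-1}$; \item $\alpha^2 - \alpha + t + 1$ vanishes at $\mathfrak{p}_{-1}$, and possibly at $\mathfrak{p}_{-3/4}$, but at no other place; and \item if $\alpha^2 - \alpha + t + 1$ vanishes at $\mathfrak{p}_{-3/4}$, then $\alpha - 1/2$ also vanishes at $\mathfrak{p}_{-3/4}$. \end{itemize} Moreover, if in this case $\alpha^2-\alpha+t+1$ vanishes at $\mathfrak{p}_{-3/4}$, then it does so to order $1$.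
   Context: Places of $\mathcal{K}$ are those trivial on $K$, corresponding to $c\in\mathbb{P}^1(K)$; $\mathfrak{p}_c$ is the place at $t=c$, and an element vanishes at a place if its valuation there is positive. (Note $\alpha^2-\alpha+t+1 = \Phi_2(-\alpha,t)$ with $\Phi_2(z,t) = z^2+z+t+1$ the second dynatomic polynomial of $f$.) For $c \in K$, $f_c(z) = z^2+c$. A point $x$ has preperiodic portrait $(M,N)$ for $\phi$ if $M\ge0$ is minimal with $\phi^M(x)$ periodic and $\phi^M(x)$ has exact period $N$. We say $\alpha$ realizes portrait $(M,N)$ for $f$ if there exists $c \in K$ such that $\alpha(c)$ (reduction modulo $\mathfrak{p}_c$) has portrait $(M,N)$ for $f_c$. *)

From HB Require Import structures.
From mathcomp Require Import all_boot all_order all_algebra.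
Set Implicit Arguments. Unset Strict Implicit. Unset Printing Implicit Defensive.
Import GRing.Theory.
Local Open Scope ring_scope.

(* The rational function field K(t) is {fraction {poly K}}; t is 'X%:F and a
   constant c : K is (c%:P)%:F. *)
Notation "x %:F" := (@FracField.tofrac _ x).
Notation ratfun K := {fraction {poly K}}.
Notation rf_t := ('X%:F).
Notation rf_const c := ((c%:P)%:F).

(* Places of K(t) trivial on K: Some c is the place p_c at t = c,
   None is the place at infinity. *)
Definition place (K : fieldType) := option K.

(* The valuation of p/q at t=c is mup c p - mup c q, at infinity it is
   deg q - deg p; these do not depend on the chosen representation. *)
Definition vanishes_at (K : fieldType) (P : place K) (x : ratfun K) : Prop :=
  exists (p q : {poly K}), q != 0 /\ x = p%:F / q%:F /\
    (p = 0 \/ match P with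
              | Some c => (mup c q < mup c p)%N
              | None => (size p < size q)%N
              end).

Definition vanishes_to_order (K : fieldType) (c : K) (x : ratfun K) (n : nat) :
  Prop :=
  exists (p q : {poly K}), q != 0 /\ p != 0 /\ x = p%:F / q%:F /\
    mup c p = (mup c q + n)%N.

(* Reduction of x modulo p_c: x lies in the local ring at p_c and its
   residue is v. *)
Definition reduces_to (K : fieldType) (c : K) (x : ratfun K) (v : K) : Prop :=
  exists (p q : {poly K}), q.[c] != 0 /\ x = p%:F / q%:F /\ v = p.[c] / q.[c].

Definition is_periodic (T : Type) (phi : T -> T) (x : T) : Prop :=
  exists n : nat, (0 < n)%N /\ iter n phi x = x.

Definition has_exact_period (T : Type) (phi : T -> T) (x : T) (N : nat) : Prop :=
  (0 < N)%N /\ iter N phi x = x /\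
  forall m : nat, (0 < m)%N -> (m < N)%N -> iter m phi x <> x.

Definition has_portrait (T : Type) (phi : T -> T) (x : T) (M N : nat) : Prop :=
  is_periodic phi (iter M phi x) /\
  (forall m : nat, (m < M)%N -> ~ is_periodic phi (iter m phi x)) /\
  has_exact_period phi (iter M phi x) N.

Definition fc (K : fieldType) (c : K) : K -> K := fun z => z ^+ 2 + c.

Definition realizes (K : fieldType) (alpha : ratfun K) (M N : nat) : Prop :=
  exists (c v : K), reduces_to c alpha v /\ has_portrait (fc c) v M N.

Definition dyn2 (K : fieldType) (alpha : ratfun K) : ratfun K :=
  alpha ^+ 2 - alpha + rf_t + 1.

Definition one_half (K : fieldType) : K := (2%:R)^-1.
Definition mthreequarters (K : fieldType) : K := - (3%:R / 4%:R).
Arguments one_half : clear implicits.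
Arguments mthreequarters : clear implicits.

Definition cond_star (K : fieldType) (alpha : ratfun K) : Prop :=
  vanishes_at (Some (-1)) alpha /\
  vanishes_at (Some (-1)) (dyn2 alpha) /\
  (forall P : place K, vanishes_at P (dyn2 alpha) ->
       P = Some (-1) \/ P = Some (mthreequarters K)) /\
  (vanishes_at (Some (mthreequarters K)) (dyn2 alpha) ->
       vanishes_at (Some (mthreequarters K)) (alpha - rf_const (one_half K))).

From HB Require Import structures.
From mathcomp Require Import all_boot all_order all_algebra.
From mathcomp Require Import ring zify.
Import GRing.Theory.
Local Open Scope ring_scope.
Set Implicit Arguments. Unset Strict Implicit.

(* Write alpha = p/q in lowest terms. Completing the square, the numerator of
   alpha^2 - alpha + t + 1 is N = (p - q/2)^2 + (t + 3/4) q^2, and its roots c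
   are exactly the parameters at which v = alpha(c) is defined and satisfies
   v^2 - v + c + 1 = 0. For such v the orbit under z^2 + c is v, v - 1, -v,
   v - 1, ..., so v has portrait (1,2) unless v = 0 (then c = -1 and p(c) = 0)
   or v = 1/2 (then c = -3/4), and conversely portrait (1,2) forces that
   relation. Hence alpha fails to realize (1,2) iff every root of N is -3/4, or
   is -1 with p(-1) = 0. At -3/4 the identity forces p - q/2 to vanish, so N
   has a simple zero there; if -3/4 is the only root, N is linear over the
   algebraically closed field, which forces p - q/2 = 0, i.e. alpha = 1/2. *)

Lemma tofrac_rep (R : idomainType) (x : {fraction R}) :
  exists n d : R, d != 0 /\ x = n%:F / d%:F.
Proof.
elim/quotW: x => r; exists (\n_r), (\d_r); split; first exact: denom_ratioP.
have dF : (\d_r)%:F != 0 by rewrite tofrac_eq0 denom_ratioP.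
apply: (mulIf dF); rewrite mulfVK //; apply/eqP.
rewrite piE /= /FracField.equivf /FracField.mulf.
by rewrite !numden_Ratio ?(oner_eq0, mulf_neq0, denom_ratioP) // !mulr1 mulrC.
Qed.

Lemma size_sqr (R : idomainType) (p : {poly R}) : size (p ^+ 2) = (size p).*2.-1.
Proof.
have [->|p0] := eqVneq p 0; first by rewrite expr0n size_poly0.
by rewrite expr2 size_mul // addnn.
Qed.

Lemma size_polyD_max (R : nzRingType) (p q : {poly R}) : size p != size q ->
  size (p + q) = maxn (size p) (size q).
Proof.
case: (ltngtP (size p) (size q)) => [lt|gt|->] //= _.
  by rewrite addrC size_polyDl // (maxn_idPr (ltnW lt)).
by rewrite size_polyDl // (maxn_idPl (ltnW gt)).
Qed.

Lemma closed_size_mup (K : closedFieldType) (P : {poly K}) c : P != 0 ->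
  (forall x, root P x -> x = c) -> size P = (mup c P).+1.
Proof.
move=> P0 rootsP.
have [m [R /implyP/(_ P0) Rc EP]] := multiplicity_XsubC P c.
have R0 : R != 0 by apply: contraNneq Rc => ->; rewrite root0.
have /negPn/eqP sR : ~~ (size R != 1).
  apply/closed_rootP => -[x Rx]; move: Rc; rewrite -(rootsP x) ?Rx //.
  by rewrite EP rootM Rx.
rewrite EP mupMr // mup_XsubCX eqxx size_Mmonic ?monic_exp ?monicXsubC //.
by rewrite sR size_exp_XsubC.
Qed.

Section PolyFractions.
Variable K : fieldType.
Implicit Types (a b p q : {poly K}) (c v : K).

Lemma tofrac_div_eq a b p q : b != 0 -> q != 0 ->
  a%:F / b%:F = p%:F / q%:F -> a * q = p * b.
Proof.
move=> b0 q0 e; apply/eqP; rewrite -tofrac_eq !tofracM -eqr_div ?tofrac_eq0 //.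
by rewrite e.
Qed.

Lemma coprime_tofrac_rep (x : {fraction {poly K}}) :
  exists p q, [/\ q != 0, coprimep p q & x = p%:F / q%:F].
Proof.
have [n [d [d0 ->]]] := tofrac_rep x; set g := gcdp n d.
have g0 : g != 0 by rewrite gcdp_eq0 negb_and d0 orbT.
have En := divpK (dvdp_gcdl n d); have Ed := divpK (dvdp_gcdr n d).
rewrite -/g in En Ed; exists (n %/ g), (d %/ g); split.
- by apply: contra d0 => /eqP e; rewrite -Ed e mul0r.
- by apply: coprimep_div_gcd; rewrite d0 orbT.
- rewrite -{1}En -{1}Ed !tofracM invfM mulrACA mulfV ?mulr1 //.
  by rewrite tofrac_eq0.
Qed.

Lemma vanishes_at_rep P a b : a != 0 -> b != 0 ->
  vanishes_at P (a%:F / b%:F) -> exists p q, [/\ p != 0, q != 0, a * q = p * b &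
    match P with Some c => (mup c q < mup c p)%N | None => (size p < size q)%N end].
Proof.
move=> a0 b0 [p [q [q0 [e vP]]]]; have E := tofrac_div_eq b0 q0 e.
have p0 : p != 0.
  apply: contra_neq a0 => p0; apply/eqP; move/eqP: E.
  by rewrite p0 mul0r mulf_eq0 (negbTE q0) orbF.
by exists p, q; split => //; case: vP => // /eqP; rewrite (negbTE p0).
Qed.

Lemma vanishes_at_root a b c : b != 0 ->
  vanishes_at (Some c) (a%:F / b%:F) -> root a c.
Proof.
have [->|a0 b0] := eqVneq a 0; first by rewrite root0.
case/(vanishes_at_rep a0 b0) => p [q [p0 q0 /(congr1 (mup c)) E lt_mup]].
rewrite -dvdp_XsubCl XsubC_dvd //; move: E; rewrite !mupM //; lia.
Qed.

Lemma root_vanishes_at a b c : b.[c] != 0 -> root a c ->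
  vanishes_at (Some c) (a%:F / b%:F).
Proof.
move=> bc ac; have b0 : b != 0 by apply: contraNneq bc => ->; rewrite horner0.
exists a, b; split => //; split => //.
have [->|a0] := eqVneq a 0; [by left | right].
by rewrite (mupNroot bc) -XsubC_dvd // dvdp_XsubCl.
Qed.

Lemma not_vanishes_at_infty a b : b != 0 -> (size b < size a)%N ->
  ~ vanishes_at None (a%:F / b%:F).
Proof.
move=> b0 lt_ba.
have a0 : a != 0 by rewrite -size_poly_gt0; apply: leq_ltn_trans lt_ba.
case/(vanishes_at_rep a0 b0) => p [q [p0 q0 E lt_pq]].
move/(congr1 (fun r : {poly K} => size r)): E; rewrite /= !size_mul //.
rewrite -!size_poly_gt0 in a0 b0 p0 q0; move: a0 b0 p0 q0 lt_ba lt_pq.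
(* The sizes appear at different canonical structures; [set] identifies them
   up to conversion, which [lia] alone would not. *)
by set sa := size a; set sb := size b; set sp := size p; set sq := size q; lia.
Qed.

Lemma reduces_to_coprime p q c v : q != 0 -> coprimep p q ->
  reduces_to c (p%:F / q%:F) v -> q.[c] != 0 /\ v = p.[c] / q.[c].
Proof.
move=> q0 cop [p' [q' [q'c [e ->]]]].
have q'0 : q' != 0 by apply: contraNneq q'c => ->; rewrite horner0.
have /(congr1 (horner^~ c)) /= := tofrac_div_eq q0 q'0 e; rewrite !hornerM => Ec.
have qc : q.[c] != 0.
  apply/eqP => qc; suff /(coprimep_root cop) : root p c by rewrite qc eqxx.
  by apply/eqP/(mulIf q'c); rewrite mul0r Ec qc mulr0.
by split => //; apply/eqP; rewrite eqr_div // Ec.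
Qed.

End PolyFractions.

Section Half.
Variable K : fieldType.
Hypothesis two_neq0 : (2%:R : K) != 0.
Local Notation h := (one_half K).
Local Notation c0 := (mthreequarters K).

Lemma half_double : h *+ 2 = 1.
Proof. by rewrite -mulr_natl mulfV. Qed.

Lemma eq_half (x : K) : (x == h) = (x *+ 2 == 1).
Proof.
apply/eqP/eqP => [->|x2]; first exact: half_double.
by apply: (mulIf two_neq0); rewrite mulr_natr x2 mulVf.
Qed.

Lemma mthreequarters_half : c0 = h ^+ 2 - 1.
Proof.
have four : (4%:R : K) = 2%:R * 2%:R by rewrite -natrM.
by rewrite /mthreequarters /one_half; field; rewrite four mulf_neq0 two_neq0.
Qed.

Lemma dyn2_sqr_half (x c : K) : x ^+ 2 - x + c + 1 = (x - h) ^+ 2 + (c - c0).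
Proof.
rewrite mthreequarters_half; apply/subr0_eq.
have -> : x ^+ 2 - x + c + 1 - ((x - h) ^+ 2 + (c - (h ^+ 2 - 1))) =
  x * (h *+ 2 - 1) by ring.
by rewrite half_double subrr mulr0.
Qed.

End Half.

Section QuadraticDynamics.
Variables (K : fieldType) (c : K).
Local Notation f := (fc c).

Lemma fc_fc_sub w : f (f w) - w = (f w - w) * (w ^+ 2 + w + c + 1).
Proof. by rewrite /fc; ring. Qed.

Lemma exact_period2_dyn2 w : has_exact_period f w 2 -> w ^+ 2 + w + c + 1 = 0.
Proof.
move=> [_ [/= f2w /(_ 1%N isT isT) /= fw]].
move: (fc_fc_sub w); rewrite f2w subrr => /esym/eqP.
by rewrite mulf_eq0 subr_eq0 (negbTE (introN eqP fw)) => /eqP.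
Qed.

Lemma portrait12_dyn2 v : has_portrait f v 1 2 -> v ^+ 2 - v + c + 1 = 0.
Proof.
move=> [_ [/(_ 0%N isT) /= v_aper /exact_period2_dyn2 /=]].
rewrite {1 2}/fc => dyn2w.
(* v^2 = f v - c, so v = +-(1 + f v); the minus sign would give f (f v) = v. *)
have : (v - (1 + f v)) * (v + (1 + f v)) = 0.
  by rewrite -oppr0 -dyn2w /fc; ring.
move/eqP; rewrite mulf_eq0 => /orP [/eqP v1|/eqP v1].
  by rewrite -oppr0 -v1 /fc; ring.
case: v_aper; exists 2%N; split => //=; apply/subr0_eq.
by rewrite -[RHS](subrr 0) -{1}dyn2w -v1 /fc; ring.
Qed.

Section Dyn2Orbit.
Variable v : K.
Hypothesis dyn2v : v ^+ 2 - v + c + 1 = 0.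

Lemma fc_dyn2 : f v = v - 1.
Proof. by apply/subr0_eq; rewrite -dyn2v /fc; ring. Qed.

Lemma fc_dyn2_pred : f (v - 1) = - v.
Proof. by apply/subr0_eq; rewrite -dyn2v /fc; ring. Qed.

Lemma fc_dyn2_opp : f (- v) = v - 1.
Proof. by rewrite /fc sqrrN; exact: fc_dyn2. Qed.

Lemma iter_fc_dyn2 n : iter n.+1 f v = v - 1 \/ iter n.+1 f v = - v.
Proof.
elim: n => [|n IH]; first by left; exact: fc_dyn2.
rewrite iterS; case: IH => ->.
  by right; exact: fc_dyn2_pred.
by left; exact: fc_dyn2_opp.
Qed.

Hypothesis two_neq0 : (2%:R : K) != 0.

Lemma periodic_dyn2 : is_periodic f v <-> v = 0.
Proof.
split=> [[[|n] [// _]]|v0]; last first.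
  by exists 2%N; split => //=; rewrite fc_dyn2 fc_dyn2_pred v0 oppr0.
case: (iter_fc_dyn2 n) => -> /eqP.
  by rewrite -subr_eq0 addrAC subrr sub0r oppr_eq0 oner_eq0.
rewrite eq_sym -addr_eq0 -mulr2n -mulr_natr mulf_eq0 (negbTE two_neq0) orbF.
by move/eqP.
Qed.

Lemma exact_period2_dyn2_pred : has_exact_period f (v - 1) 2 <-> v != one_half K.
Proof.
rewrite eq_half //; split=> [[_ [_ /(_ 1%N isT isT) /=]]|v2].
  by rewrite fc_dyn2_pred => hv; apply/eqP => v2; apply: hv; rewrite -v2; ring.
split=> //=; rewrite fc_dyn2_pred fc_dyn2_opp; split=> // -[|[|//]] //= _ _.
rewrite fc_dyn2_pred => e; move/eqP: v2; apply; apply/subr0_eq.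
by rewrite -[RHS](subrr (v - 1)) -{2}e; ring.
Qed.

Lemma portrait12_dyn2E : has_portrait f v 1 2 <-> v != 0 /\ v != one_half K.
Proof.
rewrite /has_portrait /= fc_dyn2 -exact_period2_dyn2_pred; split.
  by move=> [_ [/(_ 0%N isT) /= /periodic_dyn2 /eqP v0 ?]].
move=> [/eqP v0 per2]; split; first by case: per2 => ? [? _]; exists 2%N.
by split=> // -[|//] _ /periodic_dyn2.
Qed.

End Dyn2Orbit.

Lemma portrait12P (two_neq0 : (2%:R : K) != 0) v : has_portrait f v 1 2 <->
  [/\ v ^+ 2 - v + c + 1 = 0, v != 0 & c != mthreequarters K].
Proof.
have sqr_half := dyn2_sqr_half two_neq0 v c.
split=> [port|[dyn2v v0 cc0]].
  have dyn2v := portrait12_dyn2 port.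
  have [v0 vh] := (portrait12_dyn2E dyn2v two_neq0).1 port.
  split=> //; apply: contra_neq vh => cc0.
  move: sqr_half; rewrite dyn2v cc0 subrr addr0 => /esym/eqP.
  by rewrite sqrf_eq0 subr_eq0 => /eqP.
apply/(portrait12_dyn2E dyn2v two_neq0); split=> //.
apply: contra_neq cc0 => vh.
by move: sqr_half; rewrite dyn2v vh subrr expr0n add0r => /esym/subr0_eq.
Qed.

End QuadraticDynamics.

Lemma dyn2_div (F : fieldType) (x y t : F) : y != 0 ->
  (x / y) ^+ 2 - x / y + t + 1 = (x ^+ 2 - x * y + (t + 1) * y ^+ 2) / y ^+ 2.
Proof. by move=> y0; field. Qed.

Section Dyn2Numerator.
Variable K : fieldType.
Hypothesis two_neq0 : (2%:R : K) != 0.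
Local Notation h := (one_half K).
Local Notation c0 := (mthreequarters K).
Variables p q : {poly K}.

Definition dyn2_num := p ^+ 2 - p * q + ('X + 1) * q ^+ 2.
Definition half_num := p - h%:P * q.

Lemma dyn2_num_sqr : dyn2_num = half_num ^+ 2 + ('X - c0%:P) * q ^+ 2.
Proof.
rewrite /dyn2_num /half_num mthreequarters_half //; apply/subr0_eq.
have -> : p ^+ 2 - p * q + ('X + 1) * q ^+ 2 -
    ((p - h%:P * q) ^+ 2 + ('X - (h ^+ 2 - 1)%:P) * q ^+ 2) =
  p * q * ((h *+ 2)%:P - 1).
  by rewrite polyCB polyC_exp polyCMn; ring.
by rewrite half_double // subrr mulr0.
Qed.

Lemma horner_dyn2_num c :
  dyn2_num.[c] = p.[c] ^+ 2 - p.[c] * q.[c] + (c + 1) * q.[c] ^+ 2.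
Proof. by rewrite /dyn2_num !hornerE. Qed.

Lemma root_dyn2_num_c0 : root dyn2_num c0 -> root half_num c0.
Proof.
rewrite /root dyn2_num_sqr hornerD horner_exp hornerM hornerXsubC subrr mul0r.
by rewrite addr0 sqrf_eq0.
Qed.

Lemma root_dyn2_num_neg1 : root p (-1) -> root dyn2_num (-1).
Proof.
rewrite /root horner_dyn2_num addNr => /eqP ->.
by rewrite expr0n !mul0r subr0 addr0.
Qed.

Hypothesis q0 : q != 0.

Lemma size_dyn2_num : size dyn2_num = maxn (size (half_num ^+ 2)) (size q).*2.
Proof.
have sq : (0 < size q)%N by rewrite size_poly_gt0.
have size_lin : size (('X - c0%:P) * q ^+ 2) = (size q).*2.
  rewrite size_mul ?polyXsubC_eq0 ?expf_neq0 // size_XsubC size_sqr.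
  by move: sq; set n := size q; lia.
rewrite dyn2_num_sqr size_polyD_max size_lin // size_sqr.
by move: sq; set n := size q; set m := size half_num; lia.
Qed.

Lemma size_denom_lt_dyn2_num : (size (q ^+ 2) < size dyn2_num)%N.
Proof.
have sq : (0 < size q)%N by rewrite size_poly_gt0.
by rewrite size_dyn2_num size_sqr; move: sq; set n := size q; lia.
Qed.

Lemma dyn2_frac : dyn2 (p%:F / q%:F) = dyn2_num%:F / (q ^+ 2)%:F.
Proof.
have qF : q%:F != 0 by rewrite tofrac_eq0.
rewrite /dyn2 dyn2_div // /dyn2_num !expr2.
by rewrite !(tofracD, tofracN, tofracM, tofrac1).
Qed.

Lemma frac_sub_half : p%:F / q%:F - rf_const h = half_num%:F / q%:F.
Proof.
have qF : q%:F != 0 by rewrite tofrac_eq0.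
by rewrite /half_num tofracB tofracM mulrBl mulfK.
Qed.

Lemma frac_eq_half : p%:F / q%:F = rf_const h <-> half_num = 0.
Proof.
split=> [e|r0]; last by apply/subr0_eq; rewrite frac_sub_half r0 tofrac0 mul0r.
move: frac_sub_half; rewrite e subrr => /esym/eqP.
by rewrite mulf_eq0 invr_eq0 !tofrac_eq0 (negbTE q0) orbF => /eqP.
Qed.

Lemma half_num_eq0 : size dyn2_num = 2%N -> root dyn2_num c0 -> half_num = 0.
Proof.
move=> size2 /root_dyn2_num_c0 rc0; apply: contraTeq rc0 => r0.
suff : (size half_num <= 1)%N.
  by apply: contraTN => /(root_size_gt1 r0); rewrite ltnNge.
rewrite size_dyn2_num size_sqr in size2.
by move: size2; set n := size q; set m := size half_num; lia.
Qed.

Hypothesis cop : coprimep p q.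

Lemma root_dyn2_num_denom c : root dyn2_num c -> q.[c] != 0.
Proof.
move=> Nc; apply/eqP => qc; have /(coprimep_root cop) : root p c.
  move: Nc; rewrite /root horner_dyn2_num qc expr0n !mulr0 subr0 addr0.
  by rewrite sqrf_eq0.
by rewrite qc eqxx.
Qed.

Lemma root_dyn2_num_num c : root dyn2_num c -> root p c -> c = -1.
Proof.
move=> Nc pc; have qc := root_dyn2_num_denom Nc.
move: Nc; rewrite /root horner_dyn2_num (eqP pc) expr0n !mul0r subr0 add0r.
by rewrite mulf_eq0 sqrf_eq0 (negbTE qc) orbF addr_eq0 => /eqP.
Qed.

Lemma root_dyn2_numE c : q.[c] != 0 ->
  root dyn2_num c = ((p.[c] / q.[c]) ^+ 2 - p.[c] / q.[c] + c + 1 == 0).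
Proof.
move=> qc; rewrite dyn2_div // mulf_eq0 invr_eq0 sqrf_eq0 (negbTE qc) orbF.
by rewrite -horner_dyn2_num.
Qed.

Lemma mup_dyn2_num_c0 : root dyn2_num c0 -> mup c0 dyn2_num = 1%N.
Proof.
move=> Nc0; have qc0 := root_dyn2_num_denom Nc0.
have [r Er] := factor_theorem _ _ (root_dyn2_num_c0 Nc0).
have -> : dyn2_num = (('X - c0%:P) * r ^+ 2 + q ^+ 2) * ('X - c0%:P).
  by rewrite dyn2_num_sqr Er; ring.
rewrite mupMr; last first.
  rewrite /root hornerD hornerM hornerXsubC subrr mul0r add0r.
  by rewrite horner_exp sqrf_eq0.
by rewrite -['X - _]expr1 mup_XsubCX eqxx.
Qed.

Lemma vanishes_at_dyn2 c :
  vanishes_at (Some c) (dyn2 (p%:F / q%:F)) <-> root dyn2_num c.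
Proof.
have q20 : q ^+ 2 != 0 by rewrite expf_neq0.
rewrite dyn2_frac; split; first exact: vanishes_at_root.
move=> Nc; have qc := root_dyn2_num_denom Nc.
by apply: root_vanishes_at Nc; rewrite horner_exp expf_neq0.
Qed.

Lemma vanishes_at_frac c : vanishes_at (Some c) (p%:F / q%:F) <-> root p c.
Proof.
split; first exact: vanishes_at_root.
by move=> pc; apply: root_vanishes_at (coprimep_root cop pc) pc.
Qed.

Lemma realizes_frac : realizes (p%:F / q%:F) 1 2 <->
  exists c, [/\ root dyn2_num c, c != c0 & ~~ root p c].
Proof.
split=> [[c [v [/(reduces_to_coprime q0 cop) [qc ->]]]]|[c [Nc cc0 pc]]].
  case/portrait12P=> // dyn2v v0 cc0; exists c; split=> //.
    by rewrite root_dyn2_numE // dyn2v.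
  by apply: contra v0 => /eqP ->; rewrite mul0r.
have qc := root_dyn2_num_denom Nc.
exists c, (p.[c] / q.[c]); split; first by exists p, q.
apply/portrait12P => //; split=> //; last by rewrite mulf_neq0 ?invr_neq0.
by apply/eqP; rewrite -root_dyn2_numE.
Qed.

Lemma cond_star_frac : cond_star (p%:F / q%:F) <->
  root p (-1) /\ forall c, root dyn2_num c -> c = -1 \/ c = c0.
Proof.
rewrite /cond_star vanishes_at_frac !vanishes_at_dyn2.
split=> [[p1 [_ [roots _]]]|[p1 roots]].
  split=> // c /vanishes_at_dyn2 /roots.
  by case=> -[->]; [left | right].
split=> //; split; first exact: root_dyn2_num_neg1.
split=> [[c|]|Nc0].
- by rewrite vanishes_at_dyn2 => /roots [->|->]; [left | right].
- rewrite dyn2_frac => /not_vanishes_at_infty-/(_ _ size_denom_lt_dyn2_num) [].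
  by rewrite expf_neq0.
- rewrite frac_sub_half; apply: root_vanishes_at (root_dyn2_num_c0 Nc0).
  exact: root_dyn2_num_denom.
Qed.

Lemma vanishes_to_order_dyn2 : vanishes_at (Some c0) (dyn2 (p%:F / q%:F)) ->
  vanishes_to_order c0 (dyn2 (p%:F / q%:F)) 1.
Proof.
move=> /vanishes_at_dyn2 Nc0; have qc0 := root_dyn2_num_denom Nc0.
exists dyn2_num, (q ^+ 2); split; first by rewrite expf_neq0.
split; first by rewrite -size_poly_gt0 (leq_trans _ size_denom_lt_dyn2_num).
split; first exact: dyn2_frac.
by rewrite mup_dyn2_num_c0 // mupNroot // /root horner_exp sqrf_eq0.
Qed.

End Dyn2Numerator.

Lemma half_num_eq0P (K : closedFieldType) (p q : {poly K}) :
  (2%:R : K) != 0 -> q != 0 -> coprimep p q ->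
  half_num p q = 0 <-> forall c, root (dyn2_num p q) c -> c = mthreequarters K.
Proof.
move=> two_neq0 q0 cop; split=> [r0 c Nc|roots].
  have qc := root_dyn2_num_denom cop Nc.
  move: Nc; rewrite dyn2_num_sqr // r0 expr0n add0r rootM root_XsubC.
  by rewrite /root horner_exp sqrf_eq0 (negbTE qc) orbF => /eqP.
have lt_size := size_denom_lt_dyn2_num two_neq0 p q0.
have N0 : dyn2_num p q != 0 by rewrite -size_poly_gt0 (leq_trans _ lt_size).
have [c Nc] : exists c, root (dyn2_num p q) c.
  have sq : (0 < size q)%N by rewrite size_poly_gt0.
  apply/closed_rootP; move: lt_size sq; rewrite size_sqr.
  by set n := size q; set m := size (dyn2_num p q); lia.
have Nc0 : root (dyn2_num p q) (mthreequarters K) by rewrite -(roots c Nc).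
have size2 : size (dyn2_num p q) = 2%N.
  by rewrite (closed_size_mup N0 roots) (mup_dyn2_num_c0 two_neq0 cop Nc0).
exact: half_num_eq0 size2 Nc0.
Qed.

Theorem lemma5p13 (K : closedFieldType) (hK : [pchar K] =i pred0)
    (alpha : {fraction {poly K}}) :
  (~ realizes alpha 1 2 <-> (alpha = rf_const (one_half K) \/ cond_star alpha)) /\
  (~ realizes alpha 1 2 -> vanishes_at (Some (mthreequarters K)) (dyn2 alpha) ->
     vanishes_to_order (mthreequarters K) (dyn2 alpha) 1).
Proof.
have two_neq0 : (2%:R : K) != 0 by rewrite (pcharf0P _).1.
have [p [q [q0 cop ->]]] := coprime_tofrac_rep alpha.
split; last by move=> _; exact: vanishes_to_order_dyn2.
rewrite (realizes_frac two_neq0 q0 cop) (cond_star_frac two_neq0 q0 cop).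
rewrite (frac_eq_half p q0) (half_num_eq0P two_neq0 q0 cop).
have root_num := root_dyn2_num_num cop.
split=> [nR|[roots|[p1 roots]] [c [Nc cc0 pc]]].
- have [p1|np1] := boolP (root p (-1)); [right; split=> // c Nc | left=> c Nc].
    have [->|cc0] := eqVneq c (mthreequarters K); [by right | left].
    by apply: (root_num c Nc); apply: contraT => pc; case: nR; exists c.
  apply/eqP/negPn/negP => cc0; apply: nR; exists c; split=> //.
  by apply: contra np1 => pc; rewrite -(root_num c Nc pc).
- by rewrite (roots c Nc) eqxx in cc0.
- case: (roots c Nc) => ec; last by rewrite ec eqxx in cc0.
  by rewrite ec p1 in pc.
Qed.
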